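(* Let $F:\mathcal{W}\to\mathbb{R}$ be smooth. Let $\tilde x_t\in\mathcal{W}$, set $x^j_{t,0}=\tilde x_t$ and define $x^j_{t,k}=\mathrm{R}_{x^j_{t,k-1}}\big(-\alpha_{t,k-1}\mathcal{G}_F(x^j_{t,k-1})\big)$ for $k\ge1$, where $\alpha_{t,k-1}>0$ and $\mathcal{G}_F(x^j_{t,k-1})\in\mathrm{T}_{x^j_{t,k-1}}\mathcal{M}$ is an estimator of $\mathrm{grad}F(x^j_{t,k-1})$; assume all these points lie in $\mathcal{W}$. Then for every $k\ge1$, \[ \|\mathrm{R}_{\tilde x_t}^{-1}(x^j_{t,k})\|^2\le 2k\sum_{\tau=0}^{k-1}\alpha_{t,\tau}^2\big(C_2^2+\alpha_{t,\tau}^2C_3^2\|\mathcal{G}_F(x^j_{t,\tau})\|^2\big)\|\mathcal{G}_F(x^j_{t,\tau})\|^2 . \]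
   Context: $\mathcal{M}$ is a Riemannian manifold with norm $\|\cdot\|$ on tangent spaces; $0_x$ is the zero of $\mathrm{T}_x\mathcal{M}$. $\mathrm{R}$ is a smooth retraction ($\mathrm{R}_x(0_x)=x$, $\mathrm{D}\mathrm{R}_x(0_x)=\mathrm{id}$). $\mathcal{W}\subseteq\mathcal{M}$ is a compact connected set that is totally retractive: there is $r>0$ such that for every $y\in\mathcal{W}$, $\mathcal{W}\subseteq\mathrm{R}_y(\mathbb{B}(0_y,r))$ and $\mathrm{R}_y$ is a diffeomorphism on $\mathbb{B}(0_y,r)$; so $\mathrm{R}_x^{-1}(y)$ is defined for $x,y\in\mathcal{W}$. For $x,y\in\mathcal{W}$ let $P_{x,y}=\mathrm{R}_y^{-1}\circ\mathrm{R}_x$ (a map from $\mathrm{R}_x^{-1}(\mathcal{W})\subseteq\mathrm{T}_x\mathcal{M}$ to $\mathrm{T}_y\mathcal{M}$). $C_2,C_3>0$ are constants (depending only on $\mathcal{M}$, $\mathrm{R}$, $\mathcal{W}$, obtained as uniform bounds on the first and second derivatives of $P_{x,y}$ on this compact domain) such that for all $x,y\in\mathcal{W}$ and all $\eta\in\mathrm{T}_x\mathcal{M}$ with $\mathrm{R}_x(\eta)\in\mathcal{W}$: $\|\mathrm{D}P_{x,y}(0_x)\|_{\mathrm{op}}\le C_2$ and $\|P_{x,y}(\eta)-P_{x,y}(0_x)-\mathrm{D}P_{x,y}(0_x)[\eta]\|\le C_3\|\eta\|^2$. *)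

From HB Require Import structures.
From mathcomp Require Import all_boot all_order all_algebra.
From mathcomp Require Import all_classical all_reals all_analysis.
Set Implicit Arguments. Unset Strict Implicit. Unset Printing Implicit Defensive.
Import Order.TTheory GRing.Theory Num.Theory.
Import numFieldNormedType.Exports.
Local Open Scope ring_scope.
Local Open Scope classical_set_scope.

Definition Pmap (R : realType) (M : Type) (T : M -> normedModType R)
  (Rt : forall x : M, T x -> M) (Rinv : forall y : M, M -> T y)
  (x y : M) : T x -> T y := fun v => Rinv y (Rt x v).
Arguments Pmap {R M T} Rt Rinv x y.

(* The iterates x_{t,0} = x0, x_{t,k} = R_{x_{t,k-1}}(-alpha_{k-1} G_{k-1}(x_{t,k-1})).
   G k z is the gradient estimator used at step k, evaluated at the point z. *)
Fixpoint iterates (R : realType) (M : Type) (T : M -> normedModType R)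
  (Rt : forall x : M, T x -> M) (alpha : nat -> R) (G : nat -> forall z : M, T z)
  (x0 : M) (k : nat) : M :=
  match k with
  | 0 => x0
  | k'.+1 => let z := iterates Rt alpha G x0 k' in Rt z (- (alpha k' *: G k' z))
  end.

Definition DPmap (R : realType) (M : Type) (T : M -> normedModType R)
  (Rt : forall x : M, T x -> M) (Rinv : forall y : M, M -> T y)
  (x y : M) : T x -> T y := let f := Pmap Rt Rinv x y in 'd f 0.
Arguments DPmap {R M T} Rt Rinv x y.

(** Since [R_x(0_x) = x], the displacement of one step, seen from [x~_t], is
    [P_{x,x~}(eta) - P_{x,x~}(0)] with [eta = -alpha G(x)], whose norm is at most
    [C2 |eta| + C3 |eta|^2] by the first-order expansion of [P].  Telescoping from
    [R^{-1}_{x~}(x~) = 0] bounds [|R^{-1}_{x~}(x_k)|] by the sum of the [k] step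
    lengths; Cauchy-Schwarz and [(p + q)^2 <= 2 (p^2 + q^2)] give the square. *)
From HB Require Import structures.
From mathcomp Require Import all_boot all_order all_algebra.
From mathcomp Require Import all_classical all_reals all_analysis.
From mathcomp Require Import ring lra.
Import Order.TTheory GRing.Theory Num.Theory.
Import numFieldNormedType.Exports.
Local Open Scope ring_scope.
Local Open Scope classical_set_scope.

Lemma sqrrD_le2 {R : realFieldType} (x y : R) :
  (x + y) ^+ 2 <= 2 * (x ^+ 2 + y ^+ 2).
Proof. have := leif_mean_square x y; rewrite sqrrD; case=> + _; lra. Qed.

Lemma sqr_le_of_le_lin_quad {R : realFieldType} (a c2 c3 e : R) :
    0 <= c2 -> 0 <= c3 -> 0 <= e -> 0 <= a -> a <= c2 * e + c3 * e ^+ 2 ->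
  a ^+ 2 <= 2 * e ^+ 2 * (c2 ^+ 2 + e ^+ 2 * c3 ^+ 2).
Proof.
move=> c2_ge0 c3_ge0 e_ge0 a_ge0 a_le.
rewrite (_ : _ * _ = 2 * ((c2 * e) ^+ 2 + (c3 * e ^+ 2) ^+ 2)); last by ring.
apply: le_trans (sqrrD_le2 _ _); rewrite ler_sqr ?nnegrE //.
by rewrite addr_ge0 ?mulr_ge0 ?exprn_ge0.
Qed.

Lemma sqr_sum_le {R : realFieldType} {n : nat} (a : 'I_n -> R) :
  (\sum_i a i) ^+ 2 <= n%:R * \sum_i a i ^+ 2.
Proof.
set Q := \sum_i a i ^+ 2.
have row_sum i : \sum_j (a i ^+ 2 + a j ^+ 2) / 2 = (n%:R * a i ^+ 2 + Q) / 2.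
  by rewrite -mulr_suml big_split /= sumr_const card_ord mulr_natl.
rewrite expr2 mulr_suml.
apply: (le_trans (y := \sum_i \sum_j (a i ^+ 2 + a j ^+ 2) / 2)).
  apply: ler_sum => i _; rewrite mulr_sumr; apply: ler_sum => j _.
  by case: (leif_mean_square (a i) (a j)).
under eq_bigr => i _ do rewrite row_sum.
rewrite -mulr_suml big_split /= -mulr_sumr sumr_const card_ord -/Q.
lra.
Qed.

Lemma ler_norm_sub_telescope {R : numDomainType} {V : normedZmodType R}
    (v : nat -> V) (n : nat) :
  `|v n - v 0%N| <= \sum_(i < n) `|v i.+1 - v i|.
Proof. by rewrite -(telescope_sumr v (leq0n n)) big_mkord; exact: ler_norm_sum. Qed.

Section RetractionTransport.
Context {R : realType} {M : Type} {T : M -> normedModType R}.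
Context {Rt : forall x : M, T x -> M} {Rinv : forall y : M, M -> T y}.
Context {W : set M} {C2 C3 : R}.
Hypothesis hR0 : forall x : M, Rt x 0 = x.
Hypothesis hD : forall x y : M, W x -> W y -> forall v : T x,
  `|DPmap Rt Rinv x y v| <= C2 * `|v|.
Hypothesis hRem : forall x y : M, W x -> W y -> forall eta : T x, W (Rt x eta) ->
  `|Pmap Rt Rinv x y eta - Pmap Rt Rinv x y 0 - DPmap Rt Rinv x y eta|
    <= C3 * `|eta| ^+ 2.

Lemma norm_Rinv_retr_sub {x y : M} {eta : T x} :
  W x -> W y -> W (Rt x eta) ->
  `|Rinv y (Rt x eta) - Rinv y x| <= C2 * `|eta| + C3 * `|eta| ^+ 2.
Proof.
move=> Wx Wy Wxeta.
set P := Pmap Rt Rinv x y; set L := DPmap Rt Rinv x y.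
have -> : Rinv y (Rt x eta) - Rinv y x = L eta + (P eta - P 0 - L eta).
  by rewrite /P /Pmap hR0 [RHS]addrC subrK.
by apply: (le_trans (ler_normD _ _)); apply: lerD; [exact: hD | exact: hRem].
Qed.

End RetractionTransport.

Theorem lemma3 (R : realType) (M : Type) (T : M -> normedModType R)
  (Rt : forall x : M, T x -> M) (Rinv : forall y : M, M -> T y)
  (W : set M) (r C2 C3 : R)
  (* retraction: R_x(0_x) = x *)
  (hR0 : forall x : M, Rt x 0 = x)
  (* W totally retractive with radius r, Rinv the inverse of R_y on the ball *)
  (hr : 0 < r)
  (hWcov : forall y z : M, W y -> W z -> `|Rinv y z| < r /\ Rt y (Rinv y z) = z)
  (hRinvK : forall (y : M) (v : T y), W y -> `|v| < r -> Rinv y (Rt y v) = v)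
  (hC2 : 0 < C2) (hC3 : 0 < C3)
  (hD : forall x y : M, W x -> W y -> forall v : T x,
      `|DPmap Rt Rinv x y v| <= C2 * `|v|)
  (hRem : forall x y : M, W x -> W y -> forall eta : T x, W (Rt x eta) ->
      `|Pmap Rt Rinv x y eta - Pmap Rt Rinv x y 0 - DPmap Rt Rinv x y eta|
        <= C3 * `|eta| ^+ 2)
  (xt : M) (alpha : nat -> R) (G : nat -> forall z : M, T z)
  (halpha : forall k, 0 < alpha k)
  (hin : forall k, W (iterates Rt alpha G xt k))
  (k : nat) (hk : (1 <= k)%N) :
  `|Rinv xt (iterates Rt alpha G xt k)| ^+ 2 <=
    2 * k%:R * \sum_(tau < k)
      (alpha tau ^+ 2 *
        (C2 ^+ 2 + alpha tau ^+ 2 * C3 ^+ 2 * `|G tau (iterates Rt alpha G xt tau)| ^+ 2)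
       * `|G tau (iterates Rt alpha G xt tau)| ^+ 2).
Proof.
set z := iterates Rt alpha G xt; set g := fun n => `|G n (z n)|.
set v := fun n => Rinv xt (z n).
have zW m : W (z m) := hin m.
have xtW : W xt := hin 0%N.
have v0 : v 0%N = 0.
  by move: (hRinvK xt 0 xtW); rewrite normr0 hR0; apply.
have step n : `|v n.+1 - v n| <= C2 * (alpha n * g n) + C3 * (alpha n * g n) ^+ 2.
  set d := - (alpha n *: G n (z n)).
  have nd : `|d| = alpha n * g n by rewrite normrN normrZ gtr0_norm.
  rewrite -nd.
  exact (norm_Rinv_retr_sub hR0 hD hRem (zW n) xtW (zW n.+1)).
have step_sqr n : `|v n.+1 - v n| ^+ 2 <=
    2 * (alpha n ^+ 2 * (C2 ^+ 2 + alpha n ^+ 2 * C3 ^+ 2 * g n ^+ 2) * g n ^+ 2).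
  have e0 : 0 <= alpha n * g n by rewrite mulr_ge0 ?normr_ge0 ?(ltW (halpha n)).
  rewrite [X in _ <= X](_ : _ = 2 * (alpha n * g n) ^+ 2 *
    (C2 ^+ 2 + (alpha n * g n) ^+ 2 * C3 ^+ 2)); last by ring.
  by apply: sqr_le_of_le_lin_quad; rewrite ?normr_ge0 ?step // ltW.
have v_le : `|v k| <= \sum_(i < k) `|v i.+1 - v i|.
  by rewrite -[v k]subr0 -v0; exact: (ler_norm_sub_telescope v k).
apply: le_trans (_ : (\sum_(i < k) `|v i.+1 - v i|) ^+ 2 <= _).
  by rewrite ler_sqr ?nnegrE ?normr_ge0 ?sumr_ge0.
apply: le_trans (sqr_sum_le (fun i : 'I_k => `|v i.+1 - v i|)) _.
rewrite -mulrA mulrCA ler_wpM2l // mulr_sumr.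
by apply: ler_sum => i _; exact: step_sqr.
Qed.
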